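(* Let $\Sigma_M\subset\mathbb{C}P^2$ be a torus obtained from the construction in the context (with integers $\alpha_1,\alpha_2,\alpha_3$ such that $\alpha_1-\alpha_3$ and $\alpha_2-\alpha_3$ are relatively prime, and parameters $a_1>a_2>0$, $a_3$ as there). Then its area satisfies $$A(\Sigma_M)>\pi^2\frac{a_1+a_2}{\sqrt{a_1+a_3}}.$$
   Context: $\mathbb{C}P^2$ carries the Fubini–Study metric for which the Hopf projection $S^5\to\mathbb{C}P^2$ is a Riemannian submersion; $A(\Sigma)$ is the area of the immersed torus with respect to the induced metric, computed over a fundamental domain of the period lattice of the immersion. Construction: put $b=-\alpha_1-\alpha_2-\alpha_3$, $c=\alpha_1\alpha_2+\alpha_1\alpha_3+\alpha_2\alpha_3$, $c_1=-\alpha_1\alpha_2\alpha_3$. Let $a_1>a_2>0$ be reals with $P:=a_1^3a_2^2+a_1^2a_2^3+(a_1^2a_2+a_1a_2^2)bc_1+(a_1^2+a_2^2)c_1^2+2a_1^2a_2^2c\le 0$ and $P^2-(a_1-a_2)^2\bigl((a_1+a_2)c_1^2-a_1^2a_2^2+a_1a_2bc_1\bigr)^2\ge0$. Let $c_2$ be a real root of $(a_1-a_2)^2x^4+2Px^2+\bigl((a_1+a_2)c_1^2-a_1^2a_2^2+a_1a_2bc_1\bigr)^2=0$, and set $a_3=\frac{c_1^2+c_2^2}{a_1a_2}$, $a=\frac{bc_1+a_1a_3+a_2a_3-a_1a_2}{c_2}$. Define $v$ by $2e^{v(x)}=a_1\bigl(1-\frac{a_1-a_2}{a_1}\mathrm{sn}^2(x\sqrt{a_1+a_3},k)\bigr)$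 with $k=\frac{a_1-a_2}{a_1+a_3}$, where $\mathrm{sn}(u,k)=\sin\theta$ for $u=\int_0^\theta\frac{d\phi}{\sqrt{1-k^2\sin^2\phi}}$; $v$ has period $T=2u(\pi/2)/\sqrt{a_1+a_3}$. For $i$ modulo 3 let $F_i=\sqrt{\frac{2e^v+\alpha_{i+1}\alpha_{i+2}}{(\alpha_i-\alpha_{i+1})(\alpha_i-\alpha_{i+2})}}$, $G_i(x)=\alpha_i\int_0^x\frac{c_2-ae^{v}}{2\alpha_ie^{v}-c_1}dz$, and $\psi(x,y)=\bigl(F_1e^{i(G_1+\alpha_1y)}:F_2e^{i(G_2+\alpha_2y)}:F_3e^{i(G_3+\alpha_3y)}\bigr)$, a conformal immersion $\mathbb{R}^2\to\mathbb{C}P^2$ with induced metric $2e^{v(x)}(dx^2+dy^2)$. Assume there is $\tau\in\mathbb{R}$ with $\frac{G_1(T)-G_3(T)+(\alpha_1-\alpha_3)\tau}{2\pi},\ \frac{G_2(T)-G_3(T)+(\alpha_2-\alpha_3)\tau}{2\pi}\in\mathbb{Q}$; then $\psi$ is doubly periodic and $\Sigma_M=\psi(\mathbb{R}^2)$ is an immersed torus. *)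

From Stdlib Require Import Reals Lra ZArith QArith ClassicalEpsilon.
From Coquelicot Require Import Coquelicot.
Open Scope R_scope.

Definition ell_F (k theta : R) : R :=
  RInt (fun phi => / sqrt (1 - k ^ 2 * (sin phi) ^ 2)) 0 theta.

(** amplitude: the θ with ell_F k θ = u (unique for 0 <= k < 1) *)
Definition jacobi_am (k u : R) : R :=
  epsilon (inhabits 0) (fun theta => ell_F k theta = u).

Definition jacobi_sn (u k : R) : R := sin (jacobi_am k u).

(** * Parameters of the construction.
    al1 al2 al3 are the (real images of the integer) α_i, a1 a2 the reals
    a_1 > a_2 > 0, and c2 the chosen real root. *)
Record tparams := TParams { al1 : R; al2 : R; al3 : R; pa1 : R; pa2 : R; pc2 : R }.

Section Construction.
Local Notation A1 p := (al1 p).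
Local Notation A2 p := (al2 p).
Local Notation A3 p := (al3 p).

Definition par_b (p : tparams) : R := - A1 p - A2 p - A3 p.
Definition par_c (p : tparams) : R := A1 p * A2 p + A1 p * A3 p + A2 p * A3 p.
Definition par_c1 (p : tparams) : R := - (A1 p * A2 p * A3 p).

Definition par_P (p : tparams) : R :=
  let a1 := pa1 p in let a2 := pa2 p in
  a1 ^ 3 * a2 ^ 2 + a1 ^ 2 * a2 ^ 3
  + (a1 ^ 2 * a2 + a1 * a2 ^ 2) * par_b p * par_c1 p
  + (a1 ^ 2 + a2 ^ 2) * par_c1 p ^ 2 + 2 * a1 ^ 2 * a2 ^ 2 * par_c p.

Definition par_Q (p : tparams) : R :=
  let a1 := pa1 p in let a2 := pa2 p in
  (a1 + a2) * par_c1 p ^ 2 - a1 ^ 2 * a2 ^ 2 + a1 * a2 * par_b p * par_c1 p.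

Definition par_a3 (p : tparams) : R :=
  (par_c1 p ^ 2 + pc2 p ^ 2) / (pa1 p * pa2 p).

Definition par_a (p : tparams) : R :=
  (par_b p * par_c1 p + pa1 p * par_a3 p + pa2 p * par_a3 p - pa1 p * pa2 p) / pc2 p.

Definition par_k (p : tparams) : R := (pa1 p - pa2 p) / (pa1 p + par_a3 p).

Definition two_ev (p : tparams) (x : R) : R :=
  pa1 p * (1 - (pa1 p - pa2 p) / pa1 p
                 * (jacobi_sn (x * sqrt (pa1 p + par_a3 p)) (par_k p)) ^ 2).

Definition ev (p : tparams) (x : R) : R := two_ev p x / 2.

Definition period_T (p : tparams) : R :=
  2 * ell_F (par_k p) (PI / 2) / sqrt (pa1 p + par_a3 p).

(** radicand of F_i, for α_i = ai and {α_{i+1}, α_{i+2}} = {aj, ak} *)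
Definition F_radicand (p : tparams) (ai aj ak : R) (x : R) : R :=
  (2 * ev p x + aj * ak) / ((ai - aj) * (ai - ak)).

Definition F_coef (p : tparams) (ai aj ak : R) (x : R) : R :=
  sqrt (F_radicand p ai aj ak x).

Definition G_phase (p : tparams) (ai : R) (x : R) : R :=
  ai * RInt (fun z => (pc2 p - par_a p * ev p z) / (2 * ai * ev p z - par_c1 p)) 0 x.

Definition F1 p := F_coef p (A1 p) (A2 p) (A3 p).
Definition F2 p := F_coef p (A2 p) (A3 p) (A1 p).
Definition F3 p := F_coef p (A3 p) (A1 p) (A2 p).
Definition G1 p := G_phase p (A1 p).
Definition G2 p := G_phase p (A2 p).
Definition G3 p := G_phase p (A3 p).

End Construction.

(** * Complex projective plane CP^2: points are represented by nonzero
    vectors of C^3, two representatives being equal in CP^2 iff they differ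
    by a nonzero complex scalar. *)
Definition C3 : Type := (C * C * C)%type.

Definition cp2_eq (u w : C3) : Prop :=
  exists l : C, l <> 0%C /\
    fst (fst w) = Cmult l (fst (fst u)) /\
    snd (fst w) = Cmult l (snd (fst u)) /\
    snd w = Cmult l (snd u).

Definition polar (F theta : R) : C := (F * cos theta, F * sin theta).

Definition psi (p : tparams) (x y : R) : C3 :=
  (polar (F1 p x) (G1 p x + al1 p * y),
   polar (F2 p x) (G2 p x + al2 p * y),
   polar (F3 p x) (G3 p x + al3 p * y)).

Definition period_set (p : tparams) (w : R * R) : Prop :=
  forall x y : R, cp2_eq (psi p x y) (psi p (x + fst w) (y + snd w)).

Definition det2 (w1 w2 : R * R) : R := fst w1 * snd w2 - snd w1 * fst w2.

Definition is_lattice_basis (L : R * R -> Prop) (w1 w2 : R * R) : Prop :=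
  det2 w1 w2 <> 0 /\
  forall w : R * R, L w <->
    exists m n : Z, w = (IZR m * fst w1 + IZR n * fst w2,
                         IZR m * snd w1 + IZR n * snd w2).

(** Area of the torus for the induced metric 2 e^{v(x)} (dx^2 + dy^2),
    integrated over the fundamental parallelogram {s w1 + t w2 | s,t ∈ [0,1]}
    (parametrized by (s,t), with Jacobian |det(w1,w2)|). *)
Definition torus_area (p : tparams) (w1 w2 : R * R) : R :=
  Rabs (det2 w1 w2) *
  RInt (fun s => RInt (fun t => two_ev p (s * fst w1 + t * fst w2)) 0 1) 0 1.

Definition is_rational (r : R) : Prop := exists q : Q, r = Q2R q.

(* The conformal factor 2 e^v = a1 - (a1 - a2) sn^2 (x sqrt (a1 + a3), k) is
   T-periodic, and the substitution x = F(k, t) / sqrt (a1 + a3) turns its integral over a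
   period into (1 / sqrt (a1 + a3)) * int_0^pi (a1 - (a1 - a2) sin^2 t) / sqrt (1 - k^2 sin^2 t),
   which exceeds pi (a1 + a2) / (2 sqrt (a1 + a3)) because 1 / sqrt (1 - z) >= 1 + z / 2.
   Comparing the moduli of the homogeneous coordinates of psi shows that every period (w1, w2)
   has w1 in T Z; comparing their phases shows that (m T, s) is a period iff
   m (G_i(T) - G_3(T)) + (alpha_i - alpha_3) s lies in 2 pi Z for i = 1, 2.  As
   alpha_1 - alpha_3 and alpha_2 - alpha_3 are coprime, the periods with m = 0 are {0} x 2 pi Z,
   and the closing condition yields a period with m > 0, so the period lattice has a basis
   (n T, t0), (0, 2 pi) and every basis has |det| >= 2 pi T.  The metric depends on x only,
   so the area of a fundamental domain is |det| times the mean of 2 e^v over a period, which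
   is more than pi^2 (a1 + a2) / sqrt (a1 + a3). *)

From Stdlib Require Import Reals Lra Lia ZArith QArith Classical ClassicalEpsilon.
From Coquelicot Require Import Coquelicot.
Open Scope R_scope.

Section PeriodicIntegrals.

Variable f : R -> R.
Hypothesis f_cont : forall x, continuous f x.

Lemma ex_RInt_cont a b : ex_RInt f a b.
Proof. apply (@ex_RInt_continuous R_CompleteNormedModule); intros; apply f_cont. Qed.

Lemma RInt_Chasles_cont a b c : RInt f a b + RInt f b c = RInt f a c.
Proof. exact (RInt_Chasles f a b c (ex_RInt_cont a b) (ex_RInt_cont b c)). Qed.

Lemma RInt_affine u v a b :
  u * RInt (fun y => f (u * y + v)) a b = RInt f (u * a + v) (u * b + v).
Proof.
  rewrite <- (RInt_comp_lin f u v a b (ex_RInt_cont _ _)), RInt_scal; [reflexivity|].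
  apply (@ex_RInt_continuous R_CompleteNormedModule); intros y _.
  apply (continuous_comp (fun y => u * y + v) f); [|apply f_cont].
  apply (@ex_derive_continuous R_AbsRing R_NormedModule). auto_derive. exact I.
Qed.

Variable T : R.
Hypothesis f_periodic : forall x, f (x + T) = f x.

Lemma periodic_Z (m : Z) x : f (x + IZR m * T) = f x.
Proof.
  revert x. induction m as [|m IH|m IH] using Z.peano_ind; intros x.
  - rewrite Rmult_0_l, Rplus_0_r. reflexivity.
  - rewrite <- Z.add_1_r, plus_IZR.
    replace (x + (IZR m + 1) * T) with (x + IZR m * T + T) by ring.
    rewrite f_periodic. apply IH.
  - rewrite <- Z.sub_1_r, minus_IZR, <- (IH x), <- f_periodic. f_equal. ring.
Qed.

Lemma RInt_period_shift c : RInt f c (c + T) = RInt f 0 T.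
Proof.
  assert (E : RInt f T (c + T) = RInt f 0 c).
  { replace (RInt f T (c + T)) with (RInt f (1 * 0 + T) (1 * c + T)) by (f_equal; ring).
    rewrite <- RInt_affine, Rmult_1_l.
    apply RInt_ext; intros y _. rewrite Rmult_1_l. apply f_periodic. }
  rewrite <- (RInt_Chasles_cont c T (c + T)), <- (RInt_Chasles_cont 0 c T), E. apply Rplus_comm.
Qed.

Lemma RInt_periods (m : Z) c : RInt f c (c + IZR m * T) = IZR m * RInt f 0 T :> R.
Proof.
  revert c. induction m as [|m IH|m IH] using Z.peano_ind; intros c.
  - rewrite !Rmult_0_l, Rplus_0_r, RInt_point. reflexivity.
  - rewrite <- Z.add_1_r, plus_IZR.
    rewrite <- (RInt_Chasles_cont c (c + IZR m * T)), IH.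
    replace (c + (IZR m + 1) * T) with (c + IZR m * T + T) by ring.
    rewrite RInt_period_shift. ring.
  - rewrite <- Z.sub_1_r, minus_IZR.
    pose proof (IH c) as E.
    rewrite <- (RInt_Chasles_cont c (c + (IZR m - 1) * T)) in E.
    replace (c + IZR m * T) with (c + (IZR m - 1) * T + T) in E by ring.
    rewrite RInt_period_shift in E. lra.
Qed.

Lemma RInt_unit_periods (m : Z) c : T <> 0 -> m <> 0%Z ->
  RInt (fun t => f (c + t * (IZR m * T))) 0 1 = RInt f 0 T / T.
Proof.
  intros HT Hm. apply not_0_IZR in Hm.
  assert (E : IZR m * T * RInt (fun t => f (c + t * (IZR m * T))) 0 1 = IZR m * RInt f 0 T).
  { rewrite <- (RInt_periods m c).
    rewrite (RInt_ext _ (fun t => f (IZR m * T * t + c))) by (intros; f_equal; ring).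
    rewrite RInt_affine. f_equal; ring. }
  apply Rmult_eq_reg_l with (IZR m * T); [|apply Rmult_integral_contrapositive; tauto].
  rewrite E. field. exact HT.
Qed.

Lemma RInt_parallelogram_periods (m1 m2 : Z) : T <> 0 -> (m1 <> 0 \/ m2 <> 0)%Z ->
  RInt (fun s => RInt (fun t => f (s * (IZR m1 * T) + t * (IZR m2 * T))) 0 1) 0 1
  = RInt f 0 T / T.
Proof.
  intros HT Hm. destruct (Z.eq_dec m2 0) as [->|Hm2].
  - destruct Hm as [Hm1|]; [|lia].
    rewrite <- (RInt_unit_periods m1 0) by assumption.
    apply RInt_ext; intros s _.
    rewrite (RInt_ext _ (fun _ => f (0 + s * (IZR m1 * T)))) by (intros; f_equal; simpl; ring).
    rewrite RInt_const. unfold scal; simpl; unfold mult; simpl. ring.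
  - rewrite (RInt_ext _ (fun _ => RInt f 0 T / T)), RInt_const.
    + unfold scal; simpl; unfold mult; simpl. ring.
    + intros s _. apply RInt_unit_periods; assumption.
Qed.

End PeriodicIntegrals.

Lemma sin_pow2_bound x : 0 <= sin x ^ 2 <= 1.
Proof. pose proof (SIN_bound x). split; nra. Qed.

Lemma RInt_sub_mult_sin_pow2 a b : RInt (fun t => a - b * sin t ^ 2) 0 PI = PI * (a - b / 2).
Proof.
  apply is_RInt_unique.
  replace (PI * (a - b / 2))
    with (minus (a * PI - b * (PI - sin PI * cos PI) / 2) (a * 0 - b * (0 - sin 0 * cos 0) / 2))
    by (rewrite sin_PI, sin_0; unfold minus, plus, opp; simpl; field).
  apply (is_RInt_derive (fun t => a * t - b * (t - sin t * cos t) / 2)).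
  - intros t _. auto_derive; [exact I|].
    pose proof (sin2_cos2 t) as E. unfold Rsqr in E.
    assert (Eb : b * (sin t * sin t + cos t * cos t) = b) by (rewrite E; ring). lra.
  - intros t _. apply (@ex_derive_continuous R_AbsRing R_NormedModule). auto_derive. exact I.
Qed.

Definition ell_integrand (k phi : R) : R := / sqrt (1 - k ^ 2 * sin phi ^ 2).

Section EllipticIntegral.

Variable k : R.
Hypothesis k_range : 0 <= k < 1.

Lemma ell_radicand_range phi : 0 < 1 - k ^ 2 * sin phi ^ 2 <= 1.
Proof.
  pose proof (sin_pow2_bound phi). assert (0 <= k ^ 2 < 1) by nra. split; nra.
Qed.

Lemma ell_integrand_ge_1 phi : 1 <= ell_integrand k phi.
Proof.
  destruct (ell_radicand_range phi) as [Hpos Hle1]. unfold ell_integrand.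
  apply Rle_trans with (/ 1); [rewrite Rinv_1; lra|].
  apply Rinv_le_contravar; [now apply sqrt_lt_R0|].
  rewrite <- sqrt_1 at 2. now apply sqrt_le_1_alt.
Qed.

(* With r = sqrt (1 - z): 1 / r - 1 - z / 2 = (1 - r)^2 (2 + r) / (2 r). *)
Lemma ell_integrand_lower_bound phi : 1 + k ^ 2 * sin phi ^ 2 / 2 <= ell_integrand k phi.
Proof.
  destruct (ell_radicand_range phi) as [Hpos Hle1]. unfold ell_integrand.
  set (r := sqrt (1 - k ^ 2 * sin phi ^ 2)).
  assert (Hr : 0 < r) by now apply sqrt_lt_R0.
  assert (Hr2 : r * r = 1 - k ^ 2 * sin phi ^ 2) by now apply sqrt_sqrt; lra.
  apply Rmult_le_reg_r with r; [exact Hr|]. rewrite Rinv_l by lra.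
  assert (0 <= (1 - r) * (1 - r) * (2 + r)) by (apply Rmult_le_pos; nra). nra.
Qed.

Lemma ell_integrand_continuous phi : continuous (ell_integrand k) phi.
Proof.
  destruct (ell_radicand_range phi) as [Hpos _].
  apply (@ex_derive_continuous R_AbsRing R_NormedModule). unfold ell_integrand.
  auto_derive. repeat split; [lra|]. apply Rgt_not_eq, sqrt_lt_R0; lra.
Qed.

Lemma ell_integrand_add_PI phi : ell_integrand k (phi + PI) = ell_integrand k phi.
Proof. unfold ell_integrand. rewrite neg_sin. f_equal. f_equal. ring. Qed.

Lemma ell_F_derive t : is_derive (ell_F k) t (ell_integrand k t).
Proof.
  apply (is_derive_RInt (ell_integrand k) (ell_F k) 0 t).
  - exists (mkposreal 1 Rlt_0_1). intros y _. apply (@RInt_correct R_CompleteNormedModule).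
    apply ex_RInt_cont, ell_integrand_continuous.
  - apply ell_integrand_continuous.
Qed.

Lemma ell_F_sub a b : ell_F k b - ell_F k a = RInt (ell_integrand k) a b.
Proof.
  change (RInt (ell_integrand k) 0 b - RInt (ell_integrand k) 0 a = RInt (ell_integrand k) a b).
  rewrite <- (RInt_Chasles_cont _ ell_integrand_continuous 0 a b). ring.
Qed.

Lemma ell_F_0 : ell_F k 0 = 0.
Proof. unfold ell_F. now rewrite RInt_point. Qed.

Lemma ell_F_continuous t : continuous (ell_F k) t.
Proof.
  apply (@ex_derive_continuous R_AbsRing R_NormedModule). eexists. apply ell_F_derive.
Qed.

Lemma ell_F_expand a b : a <= b -> b - a <= ell_F k b - ell_F k a.
Proof.
  intros Hab. rewrite ell_F_sub.
  apply Rle_trans with (RInt (fun _ => 1) a b).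
  - rewrite RInt_const. unfold scal; simpl; unfold mult; simpl. lra.
  - apply RInt_le;
      [exact Hab | apply ex_RInt_const | apply ex_RInt_cont, ell_integrand_continuous |].
    intros x _. apply ell_integrand_ge_1.
Qed.

Lemma ell_F_expand_abs a b : Rabs (a - b) <= Rabs (ell_F k a - ell_F k b).
Proof.
  destruct (Rle_dec a b) as [Hab|Hab].
  - pose proof (ell_F_expand a b Hab). rewrite !Rabs_left1 by lra. lra.
  - pose proof (ell_F_expand b a ltac:(lra)). rewrite !Rabs_right by lra. lra.
Qed.

Lemma ell_F_injective a b : ell_F k a = ell_F k b -> a = b.
Proof.
  intros E. pose proof (ell_F_expand_abs a b) as H. rewrite E, Rminus_diag, Rabs_R0 in H.
  pose proof (Rabs_pos (a - b)). apply Rminus_diag_uniq, Rabs_eq_0. lra.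
Qed.

Lemma ell_F_surjective u : exists t, ell_F k t = u.
Proof.
  pose proof (Rle_abs u). pose proof (Rabs_maj2 u).
  pose proof (ell_F_expand (- Rabs u) 0 ltac:(lra)) as Hlo.
  pose proof (ell_F_expand 0 (Rabs u) ltac:(lra)) as Hhi.
  rewrite ell_F_0 in Hlo, Hhi.
  assert (Hu : Rmin (ell_F k (- Rabs u)) (ell_F k (Rabs u)) <= u
               <= Rmax (ell_F k (- Rabs u)) (ell_F k (Rabs u)))
    by (unfold Rmin, Rmax; destruct Rle_dec; lra).
  assert (Hc : continuity (ell_F k)).
  { intros x. apply continuity_pt_filterlim, ell_F_continuous. }
  destruct (IVT_gen (ell_F k) _ _ u Hc Hu) as [t [_ Ht]]. now exists t.
Qed.

Lemma ell_F_add_PI t : ell_F k (t + PI) = ell_F k t + ell_F k PI.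
Proof.
  pose proof (ell_F_sub t (t + PI)) as E.
  rewrite (RInt_period_shift _ ell_integrand_continuous _ ell_integrand_add_PI) in E.
  change (RInt (ell_integrand k) 0 PI) with (ell_F k PI) in E. lra.
Qed.

Lemma ell_F_mult_PI (m : Z) : ell_F k (IZR m * PI) = IZR m * ell_F k PI.
Proof.
  rewrite <- (Rplus_0_l (IZR m * PI)).
  exact (RInt_periods _ ell_integrand_continuous _ ell_integrand_add_PI m 0).
Qed.

Lemma ell_F_PI : ell_F k PI = 2 * ell_F k (PI / 2).
Proof.
  assert (Hsym : RInt (ell_integrand k) PI (PI / 2) = - ell_F k (PI / 2) :> R).
  { replace (RInt (ell_integrand k) PI (PI / 2))
      with (RInt (ell_integrand k) (-1 * 0 + PI) (-1 * (PI / 2) + PI)) by (f_equal; field).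
    rewrite <- (RInt_affine _ ell_integrand_continuous).
    change (ell_F k (PI / 2)) with (RInt (ell_integrand k) 0 (PI / 2)).
    rewrite (RInt_ext _ (ell_integrand k)); [ring|].
    intros y _. unfold ell_integrand.
    replace (-1 * y + PI) with (PI - y) by ring. now rewrite sin_PI_x. }
  pose proof (ell_F_sub (PI / 2) PI) as E.
  rewrite <- (opp_RInt_swap _ _ _ (ex_RInt_cont _ ell_integrand_continuous _ _)), Hsym in E.
  unfold opp in E; simpl in E. lra.
Qed.

Lemma jacobi_am_spec u : ell_F k (jacobi_am k u) = u.
Proof. unfold jacobi_am. apply epsilon_spec, ell_F_surjective. Qed.

Lemma jacobi_am_ell_F t : jacobi_am k (ell_F k t) = t.
Proof. apply ell_F_injective, jacobi_am_spec. Qed.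

Lemma jacobi_am_lipschitz u v : Rabs (jacobi_am k u - jacobi_am k v) <= Rabs (u - v).
Proof.
  rewrite <- (jacobi_am_spec u), <- (jacobi_am_spec v) at 2. apply ell_F_expand_abs.
Qed.

Lemma jacobi_am_continuous u : continuous (jacobi_am k) u.
Proof.
  apply continuity_pt_filterlim. intros eps Heps. exists eps. split; [exact Heps|].
  intros v [_ Hv]. eapply Rle_lt_trans; [apply jacobi_am_lipschitz | exact Hv].
Qed.

Lemma jacobi_am_add u : jacobi_am k (u + ell_F k PI) = jacobi_am k u + PI.
Proof. rewrite <- (jacobi_am_spec u) at 1. now rewrite <- ell_F_add_PI, jacobi_am_ell_F. Qed.

Lemma sin_jacobi_am_eq_0 u : sin (jacobi_am k u) = 0 -> exists m : Z, u = IZR m * ell_F k PI.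
Proof.
  intros H. destruct (sin_eq_0_0 _ H) as [m Hm]. exists m.
  now rewrite <- (jacobi_am_spec u), Hm, ell_F_mult_PI.
Qed.

End EllipticIntegral.

Definition sn_scale (p : tparams) : R := sqrt (pa1 p + par_a3 p).

Section ConformalFactor.

Variable p : tparams.
Hypothesis a1_gt_a2 : pa1 p > pa2 p.
Hypothesis a2_pos : pa2 p > 0.
Hypothesis c2_neq_0 : pc2 p <> 0.

Lemma par_a3_pos : par_a3 p > 0.
Proof.
  unfold par_a3. apply Rdiv_lt_0_compat; [|apply Rmult_lt_0_compat; lra].
  pose proof (pow2_gt_0 _ c2_neq_0). pose proof (pow2_ge_0 (par_c1 p)). lra.
Qed.

Lemma sn_scale_pos : sn_scale p > 0.
Proof. apply sqrt_lt_R0. pose proof par_a3_pos. lra. Qed.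

Lemma par_k_bounds : 0 < par_k p < 1.
Proof.
  pose proof par_a3_pos. unfold par_k.
  split; [apply Rdiv_lt_0_compat; lra|].
  apply Rmult_lt_reg_r with (pa1 p + par_a3 p); [lra|]. field_simplify; lra.
Qed.

Let k_range : 0 <= par_k p < 1.
Proof. pose proof par_k_bounds. lra. Qed.

Lemma two_ev_am x :
  two_ev p x = pa1 p - (pa1 p - pa2 p) * sin (jacobi_am (par_k p) (x * sn_scale p)) ^ 2.
Proof. unfold two_ev, jacobi_sn, sn_scale. field. lra. Qed.

Lemma ell_F_PI_period : ell_F (par_k p) PI = period_T p * sn_scale p.
Proof.
  pose proof sn_scale_pos. unfold period_T. fold (sn_scale p).
  rewrite ell_F_PI by exact k_range. field. lra.
Qed.

Lemma period_T_pos : period_T p > 0.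
Proof.
  pose proof (ell_F_expand _ k_range 0 (PI / 2) ltac:(pose proof PI_RGT_0; lra)).
  rewrite ell_F_0 in *. unfold period_T. fold (sn_scale p).
  pose proof sn_scale_pos. pose proof PI_RGT_0.
  apply Rdiv_lt_0_compat; lra.
Qed.

Lemma two_ev_continuous x : continuous (two_ev p) x.
Proof.
  apply (continuous_ext (fun y => pa1 p - (pa1 p - pa2 p)
                                   * sin (jacobi_am (par_k p) (y * sn_scale p)) ^ 2)).
  { intros y. symmetry. apply two_ev_am. }
  apply (continuous_comp (fun y => jacobi_am (par_k p) (y * sn_scale p))
                         (fun t => pa1 p - (pa1 p - pa2 p) * sin t ^ 2)).
  - apply (continuous_comp (fun y => y * sn_scale p) (jacobi_am (par_k p))).
    + apply (continuous_mult (fun y => y) (fun _ => sn_scale p));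
        [apply continuous_id | apply continuous_const].
    + now apply jacobi_am_continuous.
  - apply (@ex_derive_continuous R_AbsRing R_NormedModule). auto_derive. exact I.
Qed.

Lemma two_ev_periodic x : two_ev p (x + period_T p) = two_ev p x.
Proof.
  rewrite !two_ev_am.
  replace ((x + period_T p) * sn_scale p) with (x * sn_scale p + ell_F (par_k p) PI)
    by (rewrite ell_F_PI_period; ring).
  rewrite jacobi_am_add, neg_sin by exact k_range. ring.
Qed.

Lemma two_ev_0 : two_ev p 0 = pa1 p.
Proof.
  rewrite two_ev_am.
  replace (0 * sn_scale p) with (ell_F (par_k p) 0) by (rewrite ell_F_0; ring).
  rewrite jacobi_am_ell_F, sin_0 by exact k_range. ring.
Qed.

Lemma two_ev_half_period : two_ev p (period_T p / 2) = pa2 p.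
Proof.
  pose proof sn_scale_pos. rewrite two_ev_am.
  replace (period_T p / 2 * sn_scale p) with (ell_F (par_k p) (PI / 2))
    by (unfold period_T; fold (sn_scale p); field; lra).
  rewrite jacobi_am_ell_F, sin_PI2 by exact k_range. ring.
Qed.

Lemma two_ev_eq_a1 w : two_ev p w = pa1 p -> exists m : Z, w = IZR m * period_T p.
Proof.
  rewrite two_ev_am. intros E.
  assert (Hsin : sin (jacobi_am (par_k p) (w * sn_scale p)) = 0).
  { destruct (Req_dec (sin (jacobi_am (par_k p) (w * sn_scale p))) 0) as [|Hne]; [assumption|].
    exfalso. apply (pow_nonzero _ 2 Hne). apply Rmult_eq_reg_l with (pa1 p - pa2 p); lra. }
  destruct (sin_jacobi_am_eq_0 _ k_range _ Hsin) as [m Hm]. exists m.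
  rewrite ell_F_PI_period in Hm. pose proof sn_scale_pos.
  apply Rmult_eq_reg_r with (sn_scale p); [rewrite Hm; ring | lra].
Qed.

Let weighted_integrand_continuous t :
  continuous (fun t => ell_integrand (par_k p) t * (pa1 p - (pa1 p - pa2 p) * sin t ^ 2)) t.
Proof.
  apply (continuous_mult (ell_integrand (par_k p))); [now apply ell_integrand_continuous|].
  apply (@ex_derive_continuous R_AbsRing R_NormedModule). auto_derive. exact I.
Qed.

(* Substitute x = ell_F k t / sn_scale p, which turns jacobi_am k (x * sn_scale p) into t. *)
Lemma RInt_two_ev_change_var :
  RInt (two_ev p) 0 (period_T p) * sn_scale p
  = RInt (fun t => ell_integrand (par_k p) t * (pa1 p - (pa1 p - pa2 p) * sin t ^ 2)) 0 PI.
Proof.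
  pose proof sn_scale_pos.
  set (g y := two_ev p (/ sn_scale p * y + 0)).
  assert (Hscale := RInt_affine (two_ev p) two_ev_continuous (/ sn_scale p) 0 0
                                (period_T p * sn_scale p)).
  replace (/ sn_scale p * 0 + 0) with 0 in Hscale by ring.
  replace (/ sn_scale p * (period_T p * sn_scale p) + 0) with (period_T p) in Hscale
    by (field; lra).
  rewrite <- Hscale, <- ell_F_PI_period.
  transitivity (RInt g (ell_F (par_k p) 0) (ell_F (par_k p) PI)).
  { rewrite ell_F_0, Rmult_comm, <- Rmult_assoc, Rinv_r, Rmult_1_l by lra. reflexivity. }
  rewrite <- (RInt_comp g (ell_F (par_k p)) (ell_integrand (par_k p))).
  - apply RInt_ext. intros t _. unfold g. rewrite two_ev_am.
    replace ((/ sn_scale p * ell_F (par_k p) t + 0) * sn_scale p) with (ell_F (par_k p) t)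
      by (field; lra).
    rewrite jacobi_am_ell_F by exact k_range. reflexivity.
  - intros t _. apply (continuous_comp (fun y => / sn_scale p * y + 0)); [|apply two_ev_continuous].
    apply (@ex_derive_continuous R_AbsRing R_NormedModule). auto_derive. exact I.
  - intros t _. split; [now apply ell_F_derive | now apply ell_integrand_continuous].
Qed.

Lemma RInt_two_ev_lower_bound :
  PI * (pa1 p + pa2 p) / 2 < RInt (two_ev p) 0 (period_T p) * sn_scale p.
Proof.
  pose proof par_k_bounds as Hk. pose proof PI_RGT_0.
  set (C := pa1 p - pa2 p - pa2 p * par_k p ^ 2 / 2).
  rewrite RInt_two_ev_change_var.
  apply Rlt_le_trans with (RInt (fun t => pa1 p - C * sin t ^ 2) 0 PI).
  - rewrite RInt_sub_mult_sin_pow2. unfold C.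
    assert (0 < pa2 p * par_k p ^ 2) by (apply Rmult_lt_0_compat; [lra | apply pow_lt; lra]).
    nra.
  - apply RInt_le; [lra | | apply ex_RInt_cont, weighted_integrand_continuous |].
    + apply ex_RInt_cont. intros t.
      apply (@ex_derive_continuous R_AbsRing R_NormedModule). auto_derive. exact I.
    + intros t _. unfold C.
      pose proof (ell_integrand_lower_bound _ k_range t).
      pose proof (sin_pow2_bound t).
      assert (0 <= par_k p ^ 2 * sin t ^ 2) by (apply Rmult_le_pos; [apply pow2_ge_0 | lra]).
      set (N := pa1 p - (pa1 p - pa2 p) * sin t ^ 2).
      assert (HN : pa2 p <= N) by (unfold N; nra).
      assert (0 <= (ell_integrand (par_k p) t - (1 + par_k p ^ 2 * sin t ^ 2 / 2)) * N)
        by (apply Rmult_le_pos; lra).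
      assert (0 <= par_k p ^ 2 * sin t ^ 2 * (N - pa2 p)) by (apply Rmult_le_pos; lra).
      unfold N in *. nra.
Qed.

Lemma averaged_area_lower_bound D : 2 * PI * period_T p <= D ->
  PI ^ 2 * (pa1 p + pa2 p) / sn_scale p < D * (RInt (two_ev p) 0 (period_T p) / period_T p).
Proof.
  intros HD. pose proof RInt_two_ev_lower_bound as HI.
  pose proof sn_scale_pos. pose proof period_T_pos.
  pose proof PI_RGT_0.
  set (I := RInt (two_ev p) 0 (period_T p)) in *.
  assert (HIpos : 0 < I).
  { apply (Rmult_lt_reg_r (sn_scale p)); [lra|]. rewrite Rmult_0_l.
    assert (0 < PI * (pa1 p + pa2 p) / 2)
      by (apply Rdiv_lt_0_compat; [apply Rmult_lt_0_compat|]; lra).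
    lra. }
  apply Rlt_le_trans with (2 * PI * I).
  - apply (Rmult_lt_reg_r (sn_scale p)); [lra|].
    replace (PI ^ 2 * (pa1 p + pa2 p) / sn_scale p * sn_scale p)
      with (2 * PI * (PI * (pa1 p + pa2 p) / 2)) by (field; lra).
    replace (2 * PI * I * sn_scale p) with (2 * PI * (I * sn_scale p)) by ring.
    apply Rmult_lt_compat_l; lra.
  - replace (2 * PI * I) with (2 * PI * period_T p * (I / period_T p)) by (field; lra).
    apply Rmult_le_compat_r; [apply Rlt_le, Rdiv_lt_0_compat|]; lra.
Qed.

End ConformalFactor.

Lemma F_radicand_two_ev p ai aj ak x :
  F_radicand p ai aj ak x = (two_ev p x + aj * ak) / ((ai - aj) * (ai - ak)).
Proof. unfold F_radicand, ev. f_equal. field. Qed.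

Lemma lagrange_interpolation_sum (b1 b2 b3 e : R) : b1 <> b2 -> b1 <> b3 -> b2 <> b3 ->
  (e + b2 * b3) / ((b1 - b2) * (b1 - b3)) + (e + b3 * b1) / ((b2 - b3) * (b2 - b1))
  + (e + b1 * b2) / ((b3 - b1) * (b3 - b2)) = 1.
Proof.
  intros H12 H13 H23. field. repeat split; intro; apply H12 || apply H13 || apply H23; lra.
Qed.

(* The third finite difference of a monic cubic with step h is 6 h^3. *)
Lemma cubic_nonvanishing_point (e1 e2 e3 a b : R) : a < b ->
  exists v, a <= v <= b /\ (v + e1) * (v + e2) * (v + e3) <> 0.
Proof.
  intros Hab. set (f v := (v + e1) * (v + e2) * (v + e3)). set (h := (b - a) / 5).
  assert (Hh : 0 < h) by (unfold h; lra).
  assert (Hdiff : f (a + 4 * h) - 3 * f (a + 3 * h) + 3 * f (a + 2 * h) - f (a + h) = 6 * h ^ 3)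
    by (unfold f; ring).
  assert (Hh3 : 0 < h ^ 3) by (apply pow_lt; lra).
  destruct (Req_dec (f (a + h)) 0); [| exists (a + h); split; [unfold h; lra | assumption]].
  destruct (Req_dec (f (a + 2 * h)) 0); [| exists (a + 2 * h); split; [unfold h; lra | assumption]].
  destruct (Req_dec (f (a + 3 * h)) 0); [| exists (a + 3 * h); split; [unfold h; lra | assumption]].
  exists (a + 4 * h). split; [unfold h; lra | fold (f (a + 4 * h)); lra].
Qed.

Section Amplitudes.

Variable p : tparams.
Hypothesis a1_gt_a2 : pa1 p > pa2 p.
Hypothesis a2_pos : pa2 p > 0.
Hypothesis c2_neq_0 : pc2 p <> 0.

Lemma ev_periodic_Z (m : Z) x : ev p (x + IZR m * period_T p) = ev p x.
Proof. unfold ev. now rewrite (periodic_Z _ _ (two_ev_periodic p a1_gt_a2 a2_pos c2_neq_0)). Qed.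

Lemma F_coef_periodic_Z ai aj ak (m : Z) x :
  F_coef p ai aj ak (x + IZR m * period_T p) = F_coef p ai aj ak x.
Proof. unfold F_coef, F_radicand. now rewrite ev_periodic_Z. Qed.

Lemma G_phase_periodic_Z ai (m : Z) x :
  (forall z, 2 * ai * ev p z - par_c1 p <> 0) ->
  G_phase p ai (x + IZR m * period_T p) = G_phase p ai x + IZR m * G_phase p ai (period_T p).
Proof.
  intros Hden.
  set (g z := (pc2 p - par_a p * ev p z) / (2 * ai * ev p z - par_c1 p)).
  assert (Hg : forall z, continuous g z).
  { intros z. unfold g, ev.
    apply (continuous_comp (two_ev p)
             (fun e => (pc2 p - par_a p * (e / 2)) / (2 * ai * (e / 2) - par_c1 p))).
    - now apply two_ev_continuous.
    - apply (@ex_derive_continuous R_AbsRing R_NormedModule). auto_derive. apply Hden. }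
  assert (Hgper : forall z, g (z + period_T p) = g z).
  { intros z. unfold g. rewrite <- (Rmult_1_l (period_T p)). now rewrite (ev_periodic_Z 1). }
  unfold G_phase. fold g.
  rewrite <- (RInt_Chasles_cont g Hg 0 x), (RInt_periods g Hg _ Hgper). ring.
Qed.

Hypothesis al12 : al1 p <> al2 p.
Hypothesis al13 : al1 p <> al3 p.
Hypothesis al23 : al2 p <> al3 p.

Lemma F_radicand_sum x :
  F_radicand p (al1 p) (al2 p) (al3 p) x + F_radicand p (al2 p) (al3 p) (al1 p) x
  + F_radicand p (al3 p) (al1 p) (al2 p) x = 1.
Proof. rewrite !F_radicand_two_ev. now apply lagrange_interpolation_sum. Qed.

(* 2 e^v takes every value in [a2, a1], in particular one where no numerator 2 e^v + a_j a_k
   of the radicands vanishes. *)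
Lemma exists_F_radicands_nonzero : exists x,
  F_radicand p (al1 p) (al2 p) (al3 p) x <> 0 /\ F_radicand p (al2 p) (al3 p) (al1 p) x <> 0
  /\ F_radicand p (al3 p) (al1 p) (al2 p) x <> 0.
Proof.
  destruct (cubic_nonvanishing_point (al2 p * al3 p) (al3 p * al1 p) (al1 p * al2 p)
              (pa2 p) (pa1 p) a1_gt_a2) as [v [Hv Hcubic]].
  assert (Hc : continuity (two_ev p)).
  { intros x. apply continuity_pt_filterlim. now apply two_ev_continuous. }
  assert (Hrange : Rmin (two_ev p 0) (two_ev p (period_T p / 2)) <= v
                   <= Rmax (two_ev p 0) (two_ev p (period_T p / 2))).
  { rewrite two_ev_0, two_ev_half_period by assumption. unfold Rmin, Rmax; destruct Rle_dec; lra. }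
  destruct (IVT_gen (two_ev p) _ _ v Hc Hrange) as [x [_ Hx]].
  exists x. rewrite !F_radicand_two_ev, Hx.
  assert (Hne : forall u w, u <> w -> u - w <> 0) by (intros; lra).
  repeat split; apply Rmult_integral_contrapositive; split;
    try (apply Rinv_neq_0_compat, Rmult_integral_contrapositive; split; apply Hne; auto);
    intro E; apply Hcubic; rewrite E; ring.
Qed.

End Amplitudes.

Lemma cos_sin_eq_2PI_multiple a b : cos a = cos b -> sin a = sin b ->
  exists k : Z, a - b = 2 * PI * IZR k.
Proof.
  intros Hc Hs.
  assert (Hcos : cos (a - b) = 1).
  { rewrite cos_minus, Hc, Hs. pose proof (sin2_cos2 b) as E. unfold Rsqr in E. lra. }
  replace (a - b) with (2 * ((a - b) / 2)) in Hcos by field.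
  rewrite cos_2a_sin in Hcos.
  assert (Hsin : sin ((a - b) / 2) = 0) by nra.
  destruct (sin_eq_0_0 _ Hsin) as [k Hk]. exists k. lra.
Qed.

Lemma polar_rotate F theta delta (k : Z) :
  polar F (theta + delta + 2 * PI * IZR k) = Cmult (cos delta, sin delta) (polar F theta).
Proof.
  assert (Hk : sin (IZR k * PI) = 0) by (apply sin_eq_0_1; now exists k).
  assert (Hc : cos (2 * PI * IZR k) = 1).
  { replace (2 * PI * IZR k) with (2 * (IZR k * PI)) by ring. rewrite cos_2a_sin, Hk. ring. }
  assert (Hs : sin (2 * PI * IZR k) = 0).
  { replace (2 * PI * IZR k) with (2 * (IZR k * PI)) by ring. rewrite sin_2a, Hk. ring. }
  unfold polar, Cmult; simpl.
  rewrite (cos_plus (theta + delta)), (sin_plus (theta + delta)), Hc, Hs, cos_plus, sin_plus.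
  f_equal; ring.
Qed.

Lemma polar_eq_mult_norm F F' theta theta' (l : C) :
  polar F' theta' = Cmult l (polar F theta) -> F' ^ 2 = (fst l ^ 2 + snd l ^ 2) * F ^ 2.
Proof.
  destruct l as [l1 l2]. unfold polar, Cmult; simpl. intros E. injection E as E1 E2.
  pose proof (sin2_cos2 theta) as P. pose proof (sin2_cos2 theta') as P'. unfold Rsqr in P, P'.
  transitivity (F' ^ 2 * (sin theta' * sin theta' + cos theta' * cos theta'));
    [rewrite P'; ring|].
  replace (F' ^ 2 * (sin theta' * sin theta' + cos theta' * cos theta'))
    with ((F' * cos theta') ^ 2 + (F' * sin theta') ^ 2) by ring.
  rewrite E1, E2.
  transitivity ((l1 ^ 2 + l2 ^ 2) * F ^ 2 * (sin theta * sin theta + cos theta * cos theta));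
    [ring | rewrite P; ring].
Qed.

Lemma polar_eq_mult_phase F theta theta' (l : C) : F <> 0 ->
  polar F theta' = Cmult l (polar F theta) -> l = (cos (theta' - theta), sin (theta' - theta)).
Proof.
  destruct l as [l1 l2]. unfold polar, Cmult; simpl. intros HF E. injection E as E1 E2.
  assert (Hc : cos theta' = l1 * cos theta - l2 * sin theta).
  { apply Rmult_eq_reg_l with F; [rewrite E1; ring | exact HF]. }
  assert (Hs : sin theta' = l1 * sin theta + l2 * cos theta).
  { apply Rmult_eq_reg_l with F; [rewrite E2; ring | exact HF]. }
  pose proof (sin2_cos2 theta) as P. unfold Rsqr in P.
  rewrite cos_minus, sin_minus, Hc, Hs. f_equal.
  - replace l1 with (l1 * (sin theta * sin theta + cos theta * cos theta)) at 1
      by (rewrite P; ring). ring.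
  - replace l2 with (l2 * (sin theta * sin theta + cos theta * cos theta)) at 1
      by (rewrite P; ring). ring.
Qed.

Lemma Z_min_positive (P : Z -> Prop) : (exists q, (0 < q)%Z /\ P q) ->
  exists n, (0 < n)%Z /\ P n /\ forall m, (0 < m < n)%Z -> ~ P m.
Proof.
  intros [q [Hq Pq]]. apply NNPP. intros Hno.
  refine (Z_lt_induction (fun n => (0 < n)%Z -> ~ P n) _ q (Z.lt_le_incl _ _ Hq) Hq Pq).
  intros n IH Hn Pn. apply Hno. exists n. repeat split; [assumption..|].
  intros m Hm. apply IH; lia.
Qed.

Section SubgroupZR.

Variable L : Z -> R -> Prop.
Variable omega : R.
Hypothesis L_add : forall m s m' s', L m s -> L m' s' -> L (m + m')%Z (s + s').
Hypothesis L_mult : forall z m s, L m s -> L (z * m)%Z (IZR z * s).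
Hypothesis L_fibre_0 : forall s, L 0%Z s <-> exists b : Z, s = IZR b * omega.
Hypothesis L_positive : exists q s, (0 < q)%Z /\ L q s.

Lemma subgroup_ZR_basis : exists n t0, (0 < n)%Z /\
  forall m s, L m s <-> exists j i : Z, m = (j * n)%Z /\ s = IZR j * t0 + IZR i * omega.
Proof.
  destruct (Z_min_positive (fun q => exists s, L q s)) as [n [Hn [[t0 Ht0] Hmin]]].
  { destruct L_positive as [q [s [Hq Hs]]]. exists q. split; [|exists s]; assumption. }
  exists n, t0. split; [exact Hn|]. intros m s. split.
  - intros Hms.
    assert (Hrem : L (m mod n)%Z (s + IZR (- (m / n)) * t0)).
    { replace (m mod n)%Z with (m + - (m / n) * n)%Z by (rewrite Z.mod_eq; lia).
      apply L_add; [exact Hms | apply L_mult, Ht0]. }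
    assert (Hmod : (m mod n = 0)%Z).
    { pose proof (Z.mod_pos_bound m n Hn).
      destruct (Z.eq_dec (m mod n) 0) as [|Hne]; [assumption|].
      exfalso. apply (Hmin (m mod n)%Z); [lia | eexists; exact Hrem]. }
    rewrite Hmod in Hrem. apply L_fibre_0 in Hrem. destruct Hrem as [i Hi].
    exists (m / n)%Z, i. split.
    + rewrite (Z.div_mod m n) at 1 by lia. lia.
    + rewrite opp_IZR in Hi. lra.
  - intros [j [i [-> ->]]].
    rewrite <- (Z.add_0_r (j * n)). apply L_add; [now apply L_mult | apply L_fibre_0; now exists i].
Qed.

End SubgroupZR.

Lemma lattice_basis_mem_l L w1 w2 : is_lattice_basis L w1 w2 -> L w1.
Proof.
  intros [_ HL]. apply HL. exists 1%Z, 0%Z. destruct w1. simpl. f_equal; ring.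
Qed.

Lemma lattice_basis_mem_r L w1 w2 : is_lattice_basis L w1 w2 -> L w2.
Proof.
  intros [_ HL]. apply HL. exists 0%Z, 1%Z. destruct w2. simpl. f_equal; ring.
Qed.

Lemma Rabs_IZR_ge_1 (z : Z) : z <> 0%Z -> 1 <= Rabs (IZR z).
Proof. intros Hz. rewrite <- abs_IZR. apply IZR_le. lia. Qed.

Lemma lattice_basis_Rabs_det_le L u1 u2 w1 w2 :
  is_lattice_basis L u1 u2 -> is_lattice_basis L w1 w2 ->
  Rabs (det2 u1 u2) <= Rabs (det2 w1 w2).
Proof.
  intros Hu Hw.
  destruct (proj1 (proj2 Hu _) (lattice_basis_mem_l _ _ _ Hw)) as [a [b Ha]].
  destruct (proj1 (proj2 Hu _) (lattice_basis_mem_r _ _ _ Hw)) as [c [d Hc]].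
  assert (Hdet : det2 w1 w2 = IZR (a * d - b * c) * det2 u1 u2).
  { rewrite Ha, Hc. unfold det2. simpl. rewrite minus_IZR, !mult_IZR. ring. }
  assert (Hint : (a * d - b * c)%Z <> 0%Z).
  { intros E. apply (proj1 Hw). rewrite Hdet, E. ring. }
  rewrite Hdet, Rabs_mult.
  pose proof (Rabs_IZR_ge_1 _ Hint). pose proof (Rabs_pos (det2 u1 u2)). nra.
Qed.

Lemma is_rational_div_2PI x : is_rational (x / (2 * PI)) ->
  exists D k : Z, (0 < D)%Z /\ IZR D * x = 2 * PI * IZR k.
Proof.
  intros [q Hq]. exists (Z.pos (Qden q)), (Qnum q). split; [lia|].
  pose proof PI_RGT_0. assert (HD : 0 < IZR (Z.pos (Qden q))) by (apply IZR_lt; lia).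
  unfold Q2R in Hq. simpl in Hq.
  assert (Ex : x = 2 * PI * (IZR (Qnum q) * / IZR (Z.pos (Qden q)))) by (rewrite <- Hq; field; lra).
  rewrite Ex. field. lra.
Qed.

Definition closing_rel (p : tparams) (m : Z) (s : R) : Prop :=
  (exists k1 : Z, IZR m * (G1 p (period_T p) - G3 p (period_T p)) + (al1 p - al3 p) * s
                  = 2 * PI * IZR k1) /\
  (exists k2 : Z, IZR m * (G2 p (period_T p) - G3 p (period_T p)) + (al2 p - al3 p) * s
                  = 2 * PI * IZR k2).

Lemma closing_rel_add p m s m' s' :
  closing_rel p m s -> closing_rel p m' s' -> closing_rel p (m + m') (s + s').
Proof.
  intros [[k1 E1] [k2 E2]] [[k1' E1'] [k2' E2']].
  split; [exists (k1 + k1')%Z | exists (k2 + k2')%Z]; rewrite !plus_IZR; lra.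
Qed.

Lemma closing_rel_mult p (z m : Z) s : closing_rel p m s -> closing_rel p (z * m) (IZR z * s).
Proof.
  intros [[k1 E1] [k2 E2]].
  split; [exists (z * k1)%Z | exists (z * k2)%Z]; rewrite !mult_IZR.
  - transitivity (IZR z * (IZR m * (G1 p (period_T p) - G3 p (period_T p)) + (al1 p - al3 p) * s));
      [ring | rewrite E1; ring].
  - transitivity (IZR z * (IZR m * (G2 p (period_T p) - G3 p (period_T p)) + (al2 p - al3 p) * s));
      [ring | rewrite E2; ring].
Qed.

Lemma closing_rel_fibre_0 p (d1 d2 : Z) : Z.gcd d1 d2 = 1%Z ->
  IZR d1 = al1 p - al3 p -> IZR d2 = al2 p - al3 p ->
  forall s, closing_rel p 0 s <-> exists b : Z, s = IZR b * (2 * PI).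
Proof.
  intros Hgcd Hd1 Hd2 s. split.
  - intros [[k1 E1] [k2 E2]]. rewrite Rmult_0_l, Rplus_0_l, <- Hd1 in E1.
    rewrite Rmult_0_l, Rplus_0_l, <- Hd2 in E2.
    destruct (Z.gcd_bezout _ _ _ Hgcd) as [u [v Huv]].
    exists (u * k1 + v * k2)%Z.
    apply (f_equal IZR) in Huv. rewrite plus_IZR, !mult_IZR in Huv.
    rewrite plus_IZR, !mult_IZR.
    transitivity (IZR u * (IZR d1 * s) + IZR v * (IZR d2 * s)).
    + transitivity ((IZR u * IZR d1 + IZR v * IZR d2) * s); [rewrite Huv|]; ring.
    + rewrite E1, E2. ring.
  - intros [b ->]. split; [exists (d1 * b)%Z | exists (d2 * b)%Z];
      rewrite mult_IZR, <- ?Hd1, <- ?Hd2; ring.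
Qed.

Lemma closing_rel_positive p tau :
  is_rational ((G1 p (period_T p) - G3 p (period_T p) + (al1 p - al3 p) * tau) / (2 * PI)) ->
  is_rational ((G2 p (period_T p) - G3 p (period_T p) + (al2 p - al3 p) * tau) / (2 * PI)) ->
  exists q s, (0 < q)%Z /\ closing_rel p q s.
Proof.
  intros Hq1 Hq2.
  destruct (is_rational_div_2PI _ Hq1) as [D1 [k1 [HD1 E1]]].
  destruct (is_rational_div_2PI _ Hq2) as [D2 [k2 [HD2 E2]]].
  exists (D1 * D2)%Z, (IZR (D1 * D2) * tau). split; [lia|].
  split; [exists (D2 * k1)%Z | exists (D1 * k2)%Z]; rewrite !mult_IZR.
  - transitivity (IZR D2 * (IZR D1 * (G1 p (period_T p) - G3 p (period_T p)
                                      + (al1 p - al3 p) * tau)));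
      [ring | rewrite E1; ring].
  - transitivity (IZR D1 * (IZR D2 * (G2 p (period_T p) - G3 p (period_T p)
                                      + (al2 p - al3 p) * tau)));
      [ring | rewrite E2; ring].
Qed.

Section PeriodLattice.

Variable p : tparams.
Hypothesis a1_gt_a2 : pa1 p > pa2 p.
Hypothesis a2_pos : pa2 p > 0.
Hypothesis c2_neq_0 : pc2 p <> 0.
Hypothesis al12 : al1 p <> al2 p.
Hypothesis al13 : al1 p <> al3 p.
Hypothesis al23 : al2 p <> al3 p.
Hypothesis rad1_nonneg : forall x, 0 <= F_radicand p (al1 p) (al2 p) (al3 p) x.
Hypothesis rad2_nonneg : forall x, 0 <= F_radicand p (al2 p) (al3 p) (al1 p) x.
Hypothesis rad3_nonneg : forall x, 0 <= F_radicand p (al3 p) (al1 p) (al2 p) x.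
Hypothesis den1_neq_0 : forall x, 2 * al1 p * ev p x - par_c1 p <> 0.
Hypothesis den2_neq_0 : forall x, 2 * al2 p * ev p x - par_c1 p <> 0.
Hypothesis den3_neq_0 : forall x, 2 * al3 p * ev p x - par_c1 p <> 0.

Lemma period_x_component w : period_set p w -> exists m : Z, fst w = IZR m * period_T p.
Proof.
  destruct w as [w1 w2]. intros Hper. simpl.
  destruct (Hper 0 0) as [l [_ [E1 [E2 E3]]]]. unfold psi in E1, E2, E3. simpl in E1, E2, E3.
  apply polar_eq_mult_norm in E1, E2, E3.
  unfold F1, F2, F3, F_coef in E1, E2, E3. rewrite !pow2_sqrt in E1, E2, E3 by auto.
  rewrite Rplus_0_l in E1, E2, E3.
  assert (Hunit : fst l ^ 2 + snd l ^ 2 = 1).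
  { pose proof (F_radicand_sum p al12 al13 al23 w1) as S1. rewrite E1, E2, E3 in S1.
    rewrite <- S1, <- Rmult_plus_distr_l, <- Rmult_plus_distr_l, F_radicand_sum by assumption.
    ring. }
  rewrite Hunit, Rmult_1_l, !F_radicand_two_ev in E1.
  apply two_ev_eq_a1; [assumption..|]. rewrite <- (two_ev_0 p) by assumption.
  assert (Hden : (al1 p - al2 p) * (al1 p - al3 p) <> 0).
  { apply Rmult_integral_contrapositive. split; lra. }
  unfold Rdiv in E1. apply Rmult_eq_reg_r in E1; [lra | now apply Rinv_neq_0_compat].
Qed.

Lemma period_closing_rel (m : Z) s : period_set p (IZR m * period_T p, s) -> closing_rel p m s.
Proof.
  intros Hper.
  destruct (exists_F_radicands_nonzero p a1_gt_a2 a2_pos c2_neq_0 al12 al13 al23)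
    as [x [N1 [N2 N3]]].
  destruct (Hper x 0) as [l [_ [E1 [E2 E3]]]]. simpl in E1, E2, E3.
  unfold F1, F2, F3, G1, G2, G3 in E1, E2, E3.
  rewrite !F_coef_periodic_Z, !G_phase_periodic_Z in E1, E2, E3 by assumption.
  assert (F_neq_0 : forall r, 0 <= r -> r <> 0 -> sqrt r <> 0)
    by (intros r Hr Hr0 E; apply Hr0, sqrt_eq_0; assumption).
  apply polar_eq_mult_phase in E1, E2, E3;
    try (unfold F1, F2, F3, F_coef; apply F_neq_0; auto).
  rewrite E3 in E1, E2. injection E1 as C1 S1. injection E2 as C2 S2.
  destruct (cos_sin_eq_2PI_multiple _ _ (eq_sym C1) (eq_sym S1)) as [k1 Hk1].
  destruct (cos_sin_eq_2PI_multiple _ _ (eq_sym C2) (eq_sym S2)) as [k2 Hk2].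
  split; [exists k1; rewrite <- Hk1 | exists k2; rewrite <- Hk2]; unfold G1, G2, G3; ring.
Qed.

Lemma closing_rel_period (m : Z) s : closing_rel p m s -> period_set p (IZR m * period_T p, s).
Proof.
  intros [[k1 Hk1] [k2 Hk2]] x y.
  set (delta := IZR m * G3 p (period_T p) + al3 p * s).
  exists (cos delta, sin delta). split.
  { intros E. injection E as Ec Es. pose proof (sin2_cos2 delta) as P. unfold Rsqr in P.
    rewrite Ec, Es in P. lra. }
  simpl. unfold F1, F2, F3, G1, G2, G3 in *.
  rewrite !F_coef_periodic_Z, !G_phase_periodic_Z by assumption.
  rewrite <- (polar_rotate _ _ _ k1), <- (polar_rotate _ _ _ k2), <- (polar_rotate _ _ _ 0).
  repeat split; f_equal; unfold delta; lra.
Qed.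

Lemma period_set_iff w :
  period_set p w <-> exists m : Z, fst w = IZR m * period_T p /\ closing_rel p m (snd w).
Proof.
  destruct w as [w1 w2]. simpl. split.
  - intros Hper. destruct (period_x_component _ Hper) as [m Hm]. simpl in Hm. subst w1.
    exists m. split; [reflexivity | now apply period_closing_rel].
  - intros [m [-> Hrel]]. now apply closing_rel_period.
Qed.

Lemma period_lattice_basis (d1 d2 : Z) :
  Z.gcd d1 d2 = 1%Z -> IZR d1 = al1 p - al3 p -> IZR d2 = al2 p - al3 p ->
  (exists q s, (0 < q)%Z /\ closing_rel p q s) ->
  exists n t0, (0 < n)%Z /\
    is_lattice_basis (period_set p) (IZR n * period_T p, t0) (0, 2 * PI).
Proof.
  intros Hgcd Hd1 Hd2 Hpos.
  destruct (subgroup_ZR_basis (closing_rel p) (2 * PI) (closing_rel_add p) (closing_rel_mult p)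
              (closing_rel_fibre_0 p d1 d2 Hgcd Hd1 Hd2) Hpos) as [n [t0 [Hn Hbasis]]].
  exists n, t0. split; [exact Hn|]. split.
  - unfold det2; simpl. pose proof (period_T_pos p a1_gt_a2 a2_pos c2_neq_0). pose proof PI_RGT_0.
    assert (0 < IZR n) by (apply IZR_lt; exact Hn).
    assert (0 < IZR n * period_T p * (2 * PI))
      by (apply Rmult_lt_0_compat; [apply Rmult_lt_0_compat|]; lra).
    lra.
  - intros [w1 w2]. rewrite period_set_iff. simpl. split.
    + intros [m [-> Hrel]]. apply Hbasis in Hrel. destruct Hrel as [j [i [-> ->]]].
      exists j, i. rewrite mult_IZR. f_equal; ring.
    + intros [j [i E]]. injection E as -> ->. exists (j * n)%Z.
      split; [rewrite mult_IZR; ring|]. apply Hbasis. exists j, i. split; [reflexivity | ring].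
Qed.

Lemma torus_area_eq w1 w2 : is_lattice_basis (period_set p) w1 w2 ->
  torus_area p w1 w2 = Rabs (det2 w1 w2) * (RInt (two_ev p) 0 (period_T p) / period_T p).
Proof.
  intros Hb.
  destruct (period_x_component _ (lattice_basis_mem_l _ _ _ Hb)) as [m1 Hm1].
  destruct (period_x_component _ (lattice_basis_mem_r _ _ _ Hb)) as [m2 Hm2].
  assert (Hm : (m1 <> 0 \/ m2 <> 0)%Z).
  { destruct (Z.eq_dec m1 0) as [E1|]; [right | left; assumption].
    intros E2. apply (proj1 Hb). unfold det2. rewrite Hm1, Hm2, E1, E2. simpl. ring. }
  unfold torus_area. rewrite Hm1, Hm2, RInt_parallelogram_periods.
  - reflexivity.
  - now apply two_ev_continuous.
  - now apply two_ev_periodic.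
  - pose proof (period_T_pos p a1_gt_a2 a2_pos c2_neq_0). lra.
  - exact Hm.
Qed.

End PeriodLattice.

Theorem lemma1 (alpha1 alpha2 alpha3 : Z) (a1 a2 c2 : R) :
  let p := TParams (IZR alpha1) (IZR alpha2) (IZR alpha3) a1 a2 c2 in
  (* α1 - α3 and α2 - α3 relatively prime *)
  Z.gcd (alpha1 - alpha3) (alpha2 - alpha3) = 1%Z ->
  (* well-definedness of the construction: distinct α_i *)
  alpha1 <> alpha2 -> alpha1 <> alpha3 -> alpha2 <> alpha3 ->
  a1 > a2 -> a2 > 0 ->
  par_P p <= 0 ->
  par_P p ^ 2 - (a1 - a2) ^ 2 * par_Q p ^ 2 >= 0 ->
  (* c2 is a real root of (a1-a2)^2 x^4 + 2 P x^2 + Q^2 *)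
  (a1 - a2) ^ 2 * c2 ^ 4 + 2 * par_P p * c2 ^ 2 + par_Q p ^ 2 = 0 ->
  (* well-definedness: a = (...)/c2, the F_i and the integrands of G_i *)
  c2 <> 0 ->
  (forall x, 0 <= F_radicand p (IZR alpha1) (IZR alpha2) (IZR alpha3) x) ->
  (forall x, 0 <= F_radicand p (IZR alpha2) (IZR alpha3) (IZR alpha1) x) ->
  (forall x, 0 <= F_radicand p (IZR alpha3) (IZR alpha1) (IZR alpha2) x) ->
  (forall x, 2 * IZR alpha1 * ev p x - par_c1 p <> 0) ->
  (forall x, 2 * IZR alpha2 * ev p x - par_c1 p <> 0) ->
  (forall x, 2 * IZR alpha3 * ev p x - par_c1 p <> 0) ->
  (* closing condition *)
  (exists tau : R,
     is_rational ((G1 p (period_T p) - G3 p (period_T p)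
                   + (IZR alpha1 - IZR alpha3) * tau) / (2 * PI)) /\
     is_rational ((G2 p (period_T p) - G3 p (period_T p)
                   + (IZR alpha2 - IZR alpha3) * tau) / (2 * PI))) ->
  (* Σ_M is an immersed torus, and its area exceeds π^2 (a1+a2)/sqrt(a1+a3) *)
  (exists w1 w2 : R * R, is_lattice_basis (period_set p) w1 w2) /\
  (forall w1 w2 : R * R, is_lattice_basis (period_set p) w1 w2 ->
     torus_area p w1 w2 > PI ^ 2 * (a1 + a2) / sqrt (a1 + par_a3 p)).
Proof.
  intros p Hgcd H12 H13 H23 Ha12 Ha2 _ _ _ Hc2 Hr1 Hr2 Hr3 Hd1 Hd2 Hd3 [tau [Hq1 Hq2]].
  apply eq_IZR_contrapositive in H12, H13, H23.
  destruct (period_lattice_basis p) with (d1 := (alpha1 - alpha3)%Z) (d2 := (alpha2 - alpha3)%Z)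
    as [n [t0 [Hn Hbasis]]]; try assumption.
  { apply minus_IZR. }
  { apply minus_IZR. }
  { exact (closing_rel_positive p tau Hq1 Hq2). }
  split; [now exists (IZR n * period_T p, t0), (0, 2 * PI)|].
  intros w1 w2 Hw.
  rewrite torus_area_eq by assumption.
  apply (averaged_area_lower_bound p); try assumption.
  apply Rle_trans with (Rabs (det2 (IZR n * period_T p, t0) (0, 2 * PI)));
    [|exact (lattice_basis_Rabs_det_le _ _ _ _ _ Hbasis Hw)].
  assert (1 <= IZR n) by (apply IZR_le; lia).
  pose proof (period_T_pos p Ha12 Ha2 Hc2). pose proof PI_RGT_0.
  assert (period_T p <= IZR n * period_T p) by nra.
  unfold det2; simpl. replace (IZR n * period_T p * (2 * PI) - t0 * 0)
    with (2 * PI * (IZR n * period_T p)) by ring.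
  rewrite Rabs_right; [apply Rmult_le_compat_l |]; nra.
Qed.
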